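(* Let $0<q\le1\le p\le2$, let $A\in\mathbb{R}^{m\times n}$, let $\bar{x}\in\mathbb{R}^n$ have exactly $S\ge1$ nonzero groups, let $\mathcal{S}:=\{i:\bar{x}_{\mathcal{G}_i}\ne0\}$, and set $b:=A\bar{x}$. Suppose the $(p,q)$-GREC$(S,S)$ holds. Let $K$ be the smallest integer with $2^{K-1}q\ge1$. Then for every $x^*\in{\rm lev}_F(\bar{x}):=\{x:\|Ax-b\|_2^2+\lambda\|x\|_{p,q}^q\le\lambda\|\bar{x}\|_{p,q}^q\}$ (where $\lambda>0$), $$\|Ax^*-A\bar{x}\|_2^2+\lambda\|x^*_{\mathcal{G}_{\mathcal{S}^c}}\|_{p,q}^q\le\lambda^{\frac{2}{2-q}}S^{(1-2^{-K})\frac{2}{2-q}}\big/\phi_{p,q}^{\frac{2q}{2-q}}(S,S),$$ and, with $\mathcal{N}_*:=\mathcal{S}\cup\mathcal{S}(x^*;S)$, $$\|x^*_{\mathcal{G}_{\mathcal{N}_*}}-\bar{x}_{\mathcal{G}_{\mathcal{N}_*}}\|_{p,2}^2\le\lambda^{\frac{2}{2-q}}S^{(1-2^{-K})\frac{2}{2-q}}\big/\phi_{p,q}^{\frac{4}{2-q}}(S,S).$$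
   Context: Group structure: $\{1,\dots,n\}$ is partitioned into disjoint nonempty index sets $\mathcal{G}_1,\dots,\mathcal{G}_r$; $x_{\mathcal{G}_i}$ is the subvector indexed by $\mathcal{G}_i$. For $\mathcal{J}\subseteq\{1,\dots,r\}$, $\|x_{\mathcal{G}_{\mathcal{J}}}\|_{p,q}:=(\sum_{i\in\mathcal{J}}\|x_{\mathcal{G}_i}\|_p^q)^{1/q}$ and $\|x\|_{p,q}:=\|x_{\mathcal{G}_{\{1,\dots,r\}}}\|_{p,q}$; $x_{\mathcal{G}_{\mathcal{J}}}$ denotes the subvector indexed by $\bigcup_{i\in\mathcal{J}}\mathcal{G}_i$. For $\mathcal{J}\subseteq\{1,\dots,r\}$ and integer $N$, $\mathcal{J}(x;N)$ is the set of the $N$ indices $i\in\mathcal{J}^c$ with the largest $\|x_{\mathcal{G}_i}\|_p$ (ties broken arbitrarily; all of $\mathcal{J}^c$ if it has fewer than $N$ elements). Group restricted eigenvalue: $\phi_{p,q}(S,N):=\inf\{\|Ax\|_2/\|x_{\mathcal{G}_{\mathcal{N}}}\|_{p,2}: x\ne0,\ |\mathcal{J}|\le S,\ \|x_{\mathcal{G}_{\mathcal{J}^c}}\|_{p,q}\le\|x_{\mathcal{G}_{\mathcal{J}}}\|_{p,q},\ \mathcal{N}=\mathcal{J}(x;N)\cup\mathcal{J}\}$; the $(p,q)$-GREC$(S,N)$ holds if $\phi_{p,q}(S,N)>0$. *)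

From Stdlib Require Import Reals Lra Lia ZArith.
Open Scope R_scope.

Fixpoint rsum (n : nat) (f : nat -> R) : R :=
  match n with O => 0 | S k => rsum k f + f k end.

Fixpoint ncount (n : nat) (P : nat -> bool) : nat :=
  match n with O => O | S k => (ncount k P + (if P k then 1 else 0))%nat end.

(* Real power with base >= 0 convention 0^y = 0 (used only for y > 0). *)
Definition rpow (x y : R) : R := if Rlt_dec 0 x then Rpower x y else 0.

Definition norm2 (m : nat) (v : nat -> R) : R := sqrt (rsum m (fun i => v i ^ 2)).

Definition matvec (n : nat) (A : nat -> nat -> R) (x : nat -> R) : nat -> R :=
  fun i => rsum n (fun j => A i j * x j).

(* Group structure: index j < n belongs to group G_(g j), g j < r. *)
Definition group_partition (n r : nat) (g : nat -> nat) : Prop :=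
  (forall j, (j < n)%nat -> (g j < r)%nat) /\
  (forall i, (i < r)%nat -> exists j, (j < n)%nat /\ g j = i).

Definition gnorm (n : nat) (g : nat -> nat) (p : R) (x : nat -> R) (i : nat) : R :=
  rpow (rsum n (fun j => if Nat.eqb (g j) i then rpow (Rabs (x j)) p else 0)) (1 / p).

Definition pqnorm (n r : nat) (g : nat -> nat) (p q : R) (J : nat -> bool) (x : nat -> R) : R :=
  rpow (rsum r (fun i => if J i then rpow (gnorm n g p x i) q else 0)) (1 / q).

Definition nzb (a : R) : bool := if Req_EM_T a 0 then false else true.

Definition group_nz (n : nat) (g : nat -> nat) (x : nat -> R) (i : nat) : bool :=
  List.existsb (fun j => andb (Nat.eqb (g j) i) (nzb (x j))) (List.seq 0 n).

(* T is a valid choice of J(x;N): the N indices of J^c (within {0..r-1}) with the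
   largest ||x_{G_i}||_p, ties broken arbitrarily; all of J^c if |J^c| < N. *)
Definition is_top_set (n r : nat) (g : nat -> nat) (p : R) (x : nat -> R)
    (J : nat -> bool) (N : nat) (T : nat -> bool) : Prop :=
  (forall i, T i = true -> (i < r)%nat /\ J i = false) /\
  ncount r T = Nat.min N (ncount r (fun i => negb (J i))) /\
  (forall i k, (i < r)%nat -> (k < r)%nat -> T i = true -> J k = false -> T k = false ->
     gnorm n g p x k <= gnorm n g p x i).

(* The set of ratios whose infimum is phi_{p,q}(S,N). *)
Definition grec_ratio (m n r : nat) (g : nat -> nat) (A : nat -> nat -> R) (p q : R)
    (S N : nat) (y : R) : Prop :=
  exists (x : nat -> R) (J T : nat -> bool),
    (exists j, (j < n)%nat /\ x j <> 0) /\
    (forall i, J i = true -> (i < r)%nat) /\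
    (ncount r J <= S)%nat /\
    pqnorm n r g p q (fun i => negb (J i)) x <= pqnorm n r g p q J x /\
    is_top_set n r g p x J N T /\
    y = norm2 m (matvec n A x) / pqnorm n r g p 2 (fun i => orb (T i) (J i)) x.

Definition is_inf (E : R -> Prop) (a : R) : Prop :=
  (forall y, E y -> a <= y) /\ (forall b, (forall y, E y -> b <= y) -> b <= a).

Definition is_phi (m n r : nat) (g : nat -> nat) (A : nat -> nat -> R) (p q : R)
    (S N : nat) (phi : R) : Prop :=
  is_inf (grec_ratio m n r g A p q S N) phi.

(* With [e = xs - xbar] and [S] the support of [xbar], the group triangle inequality and the
   subadditivity of [t ^ q] turn the level-set inequality into
   [||A e||^2 + lambda ||xs_{S^c}||^q <= lambda ||e_S||^q].  Hence [e] lies in the cone of the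
   GREC, which gives [phi ||e_N||_{p,2} <= ||A e||], and Hoelder's inequality over the [s] groups
   of [S] gives [||e_S||^q <= s^(1 - q/2) ||e_N||_{p,2}^q].  So the left-hand side [L] satisfies
   [||A e||^2 <= L <= c ||A e||^q] with [c = lambda s^(1 - q/2) / phi^q], which forces
   [L <= c^(2 / (2 - q))]; finally [2^(-K) <= q/2]. *)

From Stdlib Require Import Reals Lra Lia ZArith List Classical FunctionalExtensionality.
Open Scope R_scope.

Lemma exp_le_exp x y : exp x <= exp y <-> x <= y.
Proof.
  split; intros H.
  - destruct (Rle_or_lt x y) as [|Hlt]; [assumption|].
    apply exp_increasing in Hlt; lra.
  - destruct H as [Hlt| ->]; [left; now apply exp_increasing|lra].
Qed.

Lemma exp_above_tangent c z : exp c * (1 + (z - c)) <= exp z.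
Proof.
  replace (exp z) with (exp c * exp (z - c)) by (rewrite <- exp_plus; f_equal; ring).
  apply Rmult_le_compat_l; [left; apply exp_pos|apply exp_ineq1_le].
Qed.

Lemma exp_convex t a b : 0 <= t <= 1 ->
  exp (t * a + (1 - t) * b) <= t * exp a + (1 - t) * exp b.
Proof.
  intros Ht. set (c := t * a + (1 - t) * b).
  pose proof (exp_above_tangent c a) as Ta. pose proof (exp_above_tangent c b) as Tb.
  assert (t * (exp c * (1 + (a - c))) <= t * exp a) by (apply Rmult_le_compat_l; lra).
  assert ((1 - t) * (exp c * (1 + (b - c))) <= (1 - t) * exp b)
    by (apply Rmult_le_compat_l; lra).
  assert (t * (exp c * (1 + (a - c))) + (1 - t) * (exp c * (1 + (b - c))) = exp c)
    by (unfold c; ring).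
  lra.
Qed.

Lemma rpow_exp x y : 0 < x -> rpow x y = exp (y * ln x).
Proof. intros H; unfold rpow, Rpower; destruct (Rlt_dec 0 x); [reflexivity|lra]. Qed.

Lemma rpow_0_l y : rpow 0 y = 0.
Proof. unfold rpow; destruct (Rlt_dec 0 0); [lra|reflexivity]. Qed.

Lemma rpow_ge0 x y : 0 <= rpow x y.
Proof. unfold rpow; destruct (Rlt_dec 0 x); [left; apply exp_pos|lra]. Qed.

Lemma rpow_gt0 x y : 0 < x -> 0 < rpow x y.
Proof. intros H; rewrite rpow_exp by exact H; apply exp_pos. Qed.

Lemma rpow_eq0 x y : 0 <= x -> rpow x y = 0 -> x = 0.
Proof. intros [H|H] E; [pose proof (rpow_gt0 x y H); lra|auto]. Qed.

Lemma rpow_rpow x a b : 0 <= x -> rpow (rpow x a) b = rpow x (a * b).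
Proof.
  intros [H| <-]; [|now rewrite !rpow_0_l].
  rewrite (rpow_exp x a), (rpow_exp x (a * b)), rpow_exp, ln_exp by (auto; apply exp_pos).
  f_equal; ring.
Qed.

Lemma rpow_1_r x : 0 <= x -> rpow x 1 = x.
Proof.
  intros [H| <-]; [|apply rpow_0_l].
  now rewrite rpow_exp, Rmult_1_l, exp_ln.
Qed.

Lemma rpow_2_r x : 0 <= x -> rpow x 2 = x ^ 2.
Proof.
  intros [H| <-]; [|rewrite rpow_0_l; ring].
  unfold rpow; destruct (Rlt_dec 0 x); [|lra].
  replace 2 with (INR 2) by (simpl; lra). now rewrite Rpower_pow.
Qed.

Lemma rpow_root_r x y : 0 <= x -> 0 < y -> rpow (rpow x (1 / y)) y = x.
Proof.
  intros Hx Hy. rewrite rpow_rpow by exact Hx.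
  replace (1 / y * y) with 1 by (field; lra). now apply rpow_1_r.
Qed.

Lemma rpow_root_l x y : 0 <= x -> 0 < y -> rpow (rpow x y) (1 / y) = x.
Proof.
  intros Hx Hy. rewrite rpow_rpow by exact Hx.
  replace (y * (1 / y)) with 1 by (field; lra). now apply rpow_1_r.
Qed.

Lemma rpow_plus_r x a b : 0 < x -> rpow x (a + b) = rpow x a * rpow x b.
Proof. intros H. rewrite !rpow_exp by exact H. rewrite <- exp_plus; f_equal; ring. Qed.

Lemma rpow_mult_distr x y a : 0 <= x -> 0 <= y -> rpow (x * y) a = rpow x a * rpow y a.
Proof.
  intros [Hx| <-] [Hy| <-]; rewrite ?Rmult_0_l, ?Rmult_0_r, ?rpow_0_l; try ring.
  rewrite !rpow_exp by (auto; nra). rewrite ln_mult, <- exp_plus by auto. f_equal; ring.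
Qed.

Lemma rpow_div x y a : 0 <= x -> 0 < y -> rpow (x / y) a = rpow x a / rpow y a.
Proof.
  intros Hx Hy. assert (Hy' : 0 < / y) by (apply Rinv_0_lt_compat; exact Hy).
  unfold Rdiv. rewrite rpow_mult_distr by lra. f_equal.
  rewrite !rpow_exp, ln_Rinv, <- exp_Ropp by auto. f_equal; ring.
Qed.

Lemma rpow_le_l x y a : 0 <= a -> 0 <= x <= y -> rpow x a <= rpow y a.
Proof.
  intros Ha [[Hx| <-] Hxy]; [|rewrite rpow_0_l; apply rpow_ge0].
  unfold rpow; destruct (Rlt_dec 0 x), (Rlt_dec 0 y); try lra.
  apply Rle_Rpower_l; lra.
Qed.

Lemma rpow_le_r x a b : 1 <= x -> a <= b -> rpow x a <= rpow x b.
Proof.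
  intros Hx Hab. unfold rpow; destruct (Rlt_dec 0 x); [|lra].
  now apply Rle_Rpower.
Qed.

Lemma rpow_le_tangent x t : 0 <= x -> 0 < t <= 1 -> rpow x t <= 1 + t * (x - 1).
Proof.
  intros [Hx| <-] Ht; [|rewrite rpow_0_l; lra].
  rewrite rpow_exp by exact Hx.
  pose proof (exp_convex t (ln x) 0 ltac:(lra)) as H.
  rewrite Rmult_0_r, Rplus_0_r, exp_ln, exp_0 in H by exact Hx. lra.
Qed.

Lemma rpow_ge_tangent z p : 0 <= z -> 1 <= p -> 1 + p * (z - 1) <= rpow z p.
Proof.
  intros Hz Hp.
  pose proof (rpow_le_tangent (rpow z p) (1 / p) (rpow_ge0 z p)) as H.
  rewrite rpow_root_l in H by lra.
  assert (Hp' : 0 < 1 / p <= 1)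
    by (split; [apply Rdiv_lt_0_compat|apply Rmult_le_reg_l with p; field_simplify]; lra).
  specialize (H Hp'). apply Rmult_le_compat_l with (r := p) in H; [|lra].
  replace (p * (1 + 1 / p * (rpow z p - 1))) with (p - 1 + rpow z p) in H by (field; lra).
  nra.
Qed.

Lemma rpow_above_tangent u w p : 0 <= u -> 0 < w -> 1 <= p ->
  rpow w p * (1 + p * (u / w - 1)) <= rpow u p.
Proof.
  intros Hu Hw Hp.
  assert (Huw : 0 <= u / w) by (apply Rle_mult_inv_pos; lra).
  replace (rpow u p) with (rpow w p * rpow (u / w) p)
    by (rewrite <- rpow_mult_distr by lra; f_equal; field; lra).
  apply Rmult_le_compat_l; [apply rpow_ge0|now apply rpow_ge_tangent].
Qed.

Lemma rpow_convex u v L p : 0 <= u -> 0 <= v -> 0 <= L <= 1 -> 1 <= p ->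
  rpow (L * u + (1 - L) * v) p <= L * rpow u p + (1 - L) * rpow v p.
Proof.
  intros Hu Hv HL Hp. pose proof (rpow_ge0 u p). pose proof (rpow_ge0 v p).
  assert (Hw : 0 <= L * u + (1 - L) * v) by nra.
  destruct Hw as [Hw|Hw]; [|rewrite <- Hw, rpow_0_l; nra].
  set (w := L * u + (1 - L) * v) in *.
  pose proof (rpow_above_tangent u w p Hu Hw Hp) as Tu.
  pose proof (rpow_above_tangent v w p Hv Hw Hp) as Tv.
  set (W := rpow w p) in *.
  assert (L * (W * (1 + p * (u / w - 1))) <= L * rpow u p) by (apply Rmult_le_compat_l; lra).
  assert ((1 - L) * (W * (1 + p * (v / w - 1))) <= (1 - L) * rpow v p)
    by (apply Rmult_le_compat_l; lra).
  assert (L * (W * (1 + p * (u / w - 1))) + (1 - L) * (W * (1 + p * (v / w - 1))) = W)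
    by (unfold w in *; field; lra).
  lra.
Qed.

Lemma rpow_ge_self x q : 0 <= x <= 1 -> 0 < q <= 1 -> x <= rpow x q.
Proof.
  intros [[Hx| <-] H1] Hq; [|rewrite rpow_0_l; lra].
  rewrite rpow_exp by exact Hx. rewrite <- (exp_ln x) at 1 by exact Hx.
  rewrite exp_le_exp.
  assert (ln x <= 0).
  { destruct H1 as [H1| ->]; [|rewrite ln_1; lra].
    rewrite <- ln_1; left; now apply ln_increasing. }
  nra.
Qed.

Lemma rpow_subadditive a b q : 0 <= a -> 0 <= b -> 0 < q <= 1 ->
  rpow (a + b) q <= rpow a q + rpow b q.
Proof.
  intros Ha Hb Hq. pose proof (rpow_ge0 a q) as Ga. pose proof (rpow_ge0 b q) as Gb.
  destruct (Req_dec (a + b) 0) as [E|E]; [rewrite E, rpow_0_l; lra|].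
  assert (Hab : 0 < a + b) by lra. set (W := rpow (a + b) q).
  assert (HW : 0 < W) by now apply rpow_gt0.
  assert (F : forall x, 0 <= x <= a + b -> x / (a + b) * W <= rpow x q).
  { intros x Hx.
    assert (Hr : x / (a + b) <= rpow x q / W).
    { unfold W; rewrite <- rpow_div by lra. apply rpow_ge_self; [|exact Hq].
      split; [apply Rle_mult_inv_pos|apply Rmult_le_reg_l with (a + b); field_simplify]; lra. }
    apply Rmult_le_compat_r with (r := W) in Hr; [|lra].
    replace (rpow x q / W * W) with (rpow x q) in Hr by (field; lra). exact Hr. }
  pose proof (F a ltac:(lra)). pose proof (F b ltac:(lra)).
  assert (a / (a + b) * W + b / (a + b) * W = W) by (field; lra).
  lra.
Qed.

Lemma rsum_ext n f h : (forall i, (i < n)%nat -> f i = h i) -> rsum n f = rsum n h.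
Proof. induction n; intros H; simpl; auto. rewrite IHn, H; auto. Qed.

Lemma rsum_le n f h : (forall i, (i < n)%nat -> f i <= h i) -> rsum n f <= rsum n h.
Proof.
  induction n; intros H; simpl; [lra|].
  pose proof (H n ltac:(lia)). assert (rsum n f <= rsum n h) by (apply IHn; auto). lra.
Qed.

Lemma rsum_plus n f h : rsum n (fun i => f i + h i) = rsum n f + rsum n h.
Proof. induction n; simpl; [ring|]. rewrite IHn; ring. Qed.

Lemma rsum_minus n f h : rsum n (fun i => f i - h i) = rsum n f - rsum n h.
Proof. induction n; simpl; [ring|]. rewrite IHn; ring. Qed.

Lemma rsum_scal n c f : rsum n (fun i => c * f i) = c * rsum n f.
Proof. induction n; simpl; [ring|]. rewrite IHn; ring. Qed.

Lemma rsum_zero n f : (forall i, (i < n)%nat -> f i = 0) -> rsum n f = 0.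
Proof.
  intros H. rewrite (rsum_ext n f (fun _ => 0)) by auto.
  clear; induction n; simpl; lra.
Qed.

Lemma rsum_nonneg n f : (forall i, (i < n)%nat -> 0 <= f i) -> 0 <= rsum n f.
Proof. intros H. rewrite <- (rsum_zero n (fun _ => 0)) by auto. now apply rsum_le. Qed.

Lemma rsum_eq0 n f : (forall i, (i < n)%nat -> 0 <= f i) -> rsum n f = 0 ->
  forall i, (i < n)%nat -> f i = 0.
Proof.
  induction n; intros H E i Hi; [lia|]. simpl in E.
  assert (0 <= rsum n f) by (apply rsum_nonneg; auto).
  pose proof (H n ltac:(lia)).
  destruct (Nat.eq_dec i n) as [->|Hin]; [lra|].
  apply IHn; auto; lra || lia.
Qed.

Lemma rsum_indicator r (J : nat -> bool) :
  rsum r (fun i => if J i then 1 else 0) = INR (ncount r J).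
Proof.
  induction r; simpl; auto.
  rewrite IHr, plus_INR. destruct (J r); simpl; ring.
Qed.

(* The tangent-line bound of [rpow _ t] at 1, applied to [N f i / Z] and summed over [J]. *)
Lemma power_mean_le r (J : nat -> bool) f t : (1 <= ncount r J)%nat ->
  (forall i, (i < r)%nat -> 0 <= f i) -> 0 < t <= 1 ->
  rsum r (fun i => if J i then rpow (f i) t else 0) <=
  rpow (INR (ncount r J)) (1 - t) * rpow (rsum r (fun i => if J i then f i else 0)) t.
Proof.
  intros HJ Hf Ht. set (N := INR (ncount r J)).
  set (Z := rsum r (fun i => if J i then f i else 0)).
  set (Y := rsum r (fun i => if J i then rpow (f i) t else 0)).
  assert (HN : 1 <= N) by (apply (le_INR 1); exact HJ).
  assert (Hnn : forall i, (i < r)%nat -> 0 <= (if J i then f i else 0))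
    by (intros i Hi; destruct (J i); auto; lra).
  assert (HZ : 0 <= Z) by (apply rsum_nonneg; exact Hnn).
  destruct HZ as [HZ|HZ].
  - assert (Hpt : forall i, (i < r)%nat ->
      rpow (N / Z) t * (if J i then rpow (f i) t else 0) <=
      (if J i then 1 else 0) + t * (N / Z * (if J i then f i else 0) - (if J i then 1 else 0))).
    { intros i Hi. destruct (J i); [|lra].
      assert (0 <= N / Z) by (apply Rle_mult_inv_pos; lra).
      rewrite <- rpow_mult_distr by auto.
      apply rpow_le_tangent; [apply Rmult_le_pos|]; auto. }
    apply rsum_le in Hpt.
    rewrite rsum_scal, rsum_plus, rsum_scal, rsum_minus, rsum_scal, rsum_indicator in Hpt.
    fold N Z Y in Hpt. rewrite rpow_div in Hpt by lra.
    replace (N + t * (N / Z * Z - N)) with N in Hpt by (field; lra).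
    pose proof (rpow_gt0 N t ltac:(lra)). pose proof (rpow_gt0 Z t HZ).
    replace (rpow N (1 - t)) with (N / rpow N t)
      by (rewrite <- (rpow_1_r N) at 1 by lra;
          replace 1 with (1 - t + t) at 1 by ring; rewrite rpow_plus_r by lra; field; lra).
    apply Rmult_le_reg_l with (rpow N t / rpow Z t); [now apply Rdiv_lt_0_compat|].
    replace (rpow N t / rpow Z t * (N / rpow N t * rpow Z t)) with N by (field; lra).
    lra.
  - rewrite <- HZ, rpow_0_l, Rmult_0_r. right. apply rsum_zero. intros i Hi.
    pose proof (rsum_eq0 _ _ Hnn (eq_sym HZ) i Hi) as H0. simpl in H0.
    destruct (J i); [rewrite H0; apply rpow_0_l|reflexivity].
Qed.

Definition lpsum n (P : nat -> bool) p (a : nat -> R) : R :=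
  rsum n (fun j => if P j then rpow (Rabs (a j)) p else 0).

Definition lpnorm n (P : nat -> bool) p (a : nat -> R) : R := rpow (lpsum n P p a) (1 / p).

Lemma lpsum_ge0 n P p a : 0 <= lpsum n P p a.
Proof. apply rsum_nonneg; intros i _; destruct (P i); [apply rpow_ge0|lra]. Qed.

Lemma lpnorm_ge0 n P p a : 0 <= lpnorm n P p a.
Proof. apply rpow_ge0. Qed.

Lemma lpnorm_rpow n P p a : 0 < p -> rpow (lpnorm n P p a) p = lpsum n P p a.
Proof. intros Hp; apply rpow_root_r; [apply lpsum_ge0|exact Hp]. Qed.

Lemma lpnorm_le n P p a b : 0 < p ->
  (forall j, (j < n)%nat -> P j = true -> Rabs (a j) <= Rabs (b j)) ->
  lpnorm n P p a <= lpnorm n P p b.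
Proof.
  intros Hp H. apply rpow_le_l; [left; apply Rdiv_lt_0_compat; lra|].
  split; [apply lpsum_ge0|]. apply rsum_le. intros j Hj.
  destruct (P j) eqn:Pj; [|lra].
  apply rpow_le_l; [lra|]. split; [apply Rabs_pos|auto].
Qed.

Lemma lpnorm_eq0 n P p a : 0 < p -> lpnorm n P p a = 0 ->
  forall j, (j < n)%nat -> P j = true -> a j = 0.
Proof.
  intros Hp E j Hj Pj.
  assert (Hs : lpsum n P p a = 0) by (rewrite <- lpnorm_rpow, E, rpow_0_l; auto).
  assert (Hnn : forall i, (i < n)%nat -> 0 <= (if P i then rpow (Rabs (a i)) p else 0))
    by (intros i _; destruct (P i); [apply rpow_ge0|lra]).
  pose proof (rsum_eq0 _ _ Hnn Hs j Hj) as Z. simpl in Z. rewrite Pj in Z.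
  apply rpow_eq0 in Z; [|apply Rabs_pos].
  destruct (Req_dec (a j) 0) as [|Hne]; [assumption|].
  exfalso; apply Rabs_no_R0 in Hne; contradiction.
Qed.

(* [z / (A + B)] is the convex combination of [x / A] and [y / B] with weight [A / (A + B)]. *)
Lemma rpow_normalized_triangle x y z A B p : 1 <= p -> 0 < A -> 0 < B ->
  0 <= x -> 0 <= y -> 0 <= z -> z <= x + y ->
  rpow z p / rpow (A + B) p
  <= A / (A + B) * (rpow x p / rpow A p) + B / (A + B) * (rpow y p / rpow B p).
Proof.
  intros Hp HA HB Hx Hy Hz Hxyz. set (L := A / (A + B)).
  assert (HL : 0 <= L <= 1)
    by (unfold L; split; [apply Rle_mult_inv_pos|apply Rmult_le_reg_l with (A + B);
          [|field_simplify]]; lra).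
  assert (Hc : z / (A + B) <= L * (x / A) + (1 - L) * (y / B)).
  { replace (L * (x / A) + (1 - L) * (y / B)) with ((x + y) / (A + B)) by (unfold L; field; lra).
    apply Rmult_le_compat_r; [left; apply Rinv_0_lt_compat; lra|exact Hxyz]. }
  replace (B / (A + B)) with (1 - L) by (unfold L; field; lra).
  rewrite <- !rpow_div by lra.
  eapply Rle_trans; [apply rpow_le_l; [lra|split; [apply Rle_mult_inv_pos; lra|exact Hc]]|].
  apply rpow_convex; [apply Rle_mult_inv_pos; lra|apply Rle_mult_inv_pos; lra|exact HL|exact Hp].
Qed.

Lemma minkowski n P p a b c : 1 <= p ->
  (forall j, (j < n)%nat -> P j = true -> Rabs (c j) <= Rabs (a j) + Rabs (b j)) ->
  lpnorm n P p c <= lpnorm n P p a + lpnorm n P p b.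
Proof.
  intros Hp H.
  destruct (Req_dec (lpnorm n P p a) 0) as [HA|HA].
  { rewrite HA, Rplus_0_l. apply lpnorm_le; [lra|]. intros j Hj Pj.
    specialize (H j Hj Pj). rewrite (lpnorm_eq0 n P p a ltac:(lra) HA j Hj Pj), Rabs_R0 in H.
    lra. }
  destruct (Req_dec (lpnorm n P p b) 0) as [HB|HB].
  { rewrite HB, Rplus_0_r. apply lpnorm_le; [lra|]. intros j Hj Pj.
    specialize (H j Hj Pj). rewrite (lpnorm_eq0 n P p b ltac:(lra) HB j Hj Pj), Rabs_R0 in H.
    lra. }
  pose proof (lpnorm_ge0 n P p a). pose proof (lpnorm_ge0 n P p b).
  set (A := lpnorm n P p a) in *. set (B := lpnorm n P p b) in *.
  assert (HA' : 0 < A) by lra. assert (HB' : 0 < B) by lra.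
  pose proof (rpow_gt0 A p HA'). pose proof (rpow_gt0 B p HB').
  pose proof (rpow_gt0 (A + B) p ltac:(lra)).
  assert (Hpt : forall j, (j < n)%nat ->
    / rpow (A + B) p * (if P j then rpow (Rabs (c j)) p else 0) <=
    A / (A + B) / rpow A p * (if P j then rpow (Rabs (a j)) p else 0) +
    B / (A + B) / rpow B p * (if P j then rpow (Rabs (b j)) p else 0)).
  { intros j Hj. destruct (P j) eqn:Pj; [|lra].
    pose proof (rpow_normalized_triangle (Rabs (a j)) (Rabs (b j)) (Rabs (c j)) A B p Hp HA' HB'
                  (Rabs_pos _) (Rabs_pos _) (Rabs_pos _) (H j Hj Pj)).
    unfold Rdiv in *; lra. }
  apply rsum_le in Hpt. rewrite rsum_plus, !rsum_scal in Hpt.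
  fold (lpsum n P p c) (lpsum n P p a) (lpsum n P p b) in Hpt.
  rewrite <- !lpnorm_rpow in Hpt by lra. fold A B in Hpt.
  replace (A / (A + B) / rpow A p * rpow A p + B / (A + B) / rpow B p * rpow B p) with 1 in Hpt
    by (field; lra).
  unfold lpnorm at 1. rewrite <- (rpow_root_l (A + B) p) by lra.
  apply rpow_le_l; [left; apply Rdiv_lt_0_compat; lra|].
  split; [apply lpsum_ge0|].
  apply Rmult_le_reg_l with (/ rpow (A + B) p); [now apply Rinv_0_lt_compat|].
  rewrite Rinv_l by lra. rewrite <- lpnorm_rpow by lra. exact Hpt.
Qed.

Lemma group_nz_false n g x i :
  group_nz n g x i = false -> forall j, (j < n)%nat -> g j = i -> x j = 0.
Proof.
  intros H j Hj Hg. destruct (Req_dec (x j) 0) as [|Hne]; [assumption|].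
  exfalso. revert H. apply Bool.not_false_iff_true, existsb_exists.
  exists j. split; [apply in_seq; lia|].
  rewrite Hg, Nat.eqb_refl. unfold nzb. now destruct (Req_EM_T (x j) 0).
Qed.

Lemma group_nz_lt n r g x i : group_partition n r g -> group_nz n g x i = true -> (i < r)%nat.
Proof.
  intros [Hg _] H. apply existsb_exists in H as [j [Hj Hb]].
  apply in_seq in Hj. apply andb_prop in Hb as [Hb _].
  apply Nat.eqb_eq in Hb as <-. apply Hg; lia.
Qed.

Lemma gnorm_ext n g p x y i : (forall j, (j < n)%nat -> g j = i -> x j = y j) ->
  gnorm n g p x i = gnorm n g p y i.
Proof.
  intros H. unfold gnorm. f_equal. apply rsum_ext. intros j Hj.
  destruct (Nat.eqb_spec (g j) i); [rewrite H|]; auto.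
Qed.

Lemma gnorm_eq0 n g p x i : (forall j, (j < n)%nat -> g j = i -> x j = 0) ->
  gnorm n g p x i = 0.
Proof.
  intros H. unfold gnorm. rewrite rsum_zero; [apply rpow_0_l|].
  intros j Hj. destruct (Nat.eqb_spec (g j) i); [|reflexivity].
  rewrite H, Rabs_R0, rpow_0_l; auto.
Qed.

Lemma gnorm_triangle n g p x y z i : 1 <= p ->
  (forall j, (j < n)%nat -> Rabs (x j) <= Rabs (y j) + Rabs (z j)) ->
  gnorm n g p x i <= gnorm n g p y i + gnorm n g p z i.
Proof. intros Hp H. apply (minkowski n (fun j => Nat.eqb (g j) i)); auto. Qed.

Definition pqsum n r g p q (J : nat -> bool) (x : nat -> R) : R :=
  rsum r (fun i => if J i then rpow (gnorm n g p x i) q else 0).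

Lemma pqsum_ge0 n r g p q J x : 0 <= pqsum n r g p q J x.
Proof. apply rsum_nonneg; intros i _; destruct (J i); [apply rpow_ge0|lra]. Qed.

Lemma pqnorm_rpow n r g p q J x : 0 < q ->
  rpow (pqnorm n r g p q J x) q = pqsum n r g p q J x.
Proof. intros Hq; apply rpow_root_r; [apply pqsum_ge0|exact Hq]. Qed.

Lemma pqnorm_sq n r g p J x : pqnorm n r g p 2 J x ^ 2 = pqsum n r g p 2 J x.
Proof. rewrite <- rpow_2_r by apply rpow_ge0. apply pqnorm_rpow; lra. Qed.

Lemma pqsum_subset n r g p q (J1 J2 : nat -> bool) x :
  (forall i, J1 i = true -> J2 i = true) -> pqsum n r g p q J1 x <= pqsum n r g p q J2 x.
Proof.
  intros H. apply rsum_le. intros i _. pose proof (rpow_ge0 (gnorm n g p x i) q).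
  destruct (J1 i) eqn:E; [rewrite H by exact E; lra|destruct (J2 i); lra].
Qed.

Lemma pqsum_split n r g p q (J : nat -> bool) x :
  pqsum n r g p q (fun _ => true) x
  = pqsum n r g p q J x + pqsum n r g p q (fun i => negb (J i)) x.
Proof.
  unfold pqsum. rewrite <- rsum_plus. apply rsum_ext. intros i _.
  destruct (J i); simpl; ring.
Qed.

Lemma pqsum_ext n r g p q (J : nat -> bool) x y :
  (forall i j, J i = true -> (j < n)%nat -> g j = i -> x j = y j) ->
  pqsum n r g p q J x = pqsum n r g p q J y.
Proof.
  intros H. apply rsum_ext. intros i _. destruct (J i) eqn:E; [|reflexivity].
  f_equal. apply gnorm_ext. intros j Hj Hg. exact (H i j E Hj Hg).
Qed.

Lemma pqsum_support n r g p q x :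
  pqsum n r g p q (fun _ => true) x = pqsum n r g p q (group_nz n g x) x.
Proof.
  apply rsum_ext. intros i _. destruct (group_nz n g x i) eqn:E; [reflexivity|].
  rewrite gnorm_eq0, rpow_0_l; [reflexivity|]. exact (group_nz_false n g x i E).
Qed.

Lemma pqsum_triangle n r g p q J x y z : 1 <= p -> 0 < q <= 1 ->
  (forall j, (j < n)%nat -> Rabs (x j) <= Rabs (y j) + Rabs (z j)) ->
  pqsum n r g p q J x <= pqsum n r g p q J y + pqsum n r g p q J z.
Proof.
  intros Hp Hq H. unfold pqsum. rewrite <- rsum_plus. apply rsum_le. intros i _.
  destruct (J i); [|lra].
  eapply Rle_trans.
  - apply rpow_le_l; [lra|split; [apply rpow_ge0|exact (gnorm_triangle n g p x y z i Hp H)]].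
  - apply rpow_subadditive; [apply rpow_ge0|apply rpow_ge0|exact Hq].
Qed.

Lemma pqsum_power_mean n r g p q J x : (1 <= ncount r J)%nat -> 0 < q <= 2 ->
  pqsum n r g p q J x
  <= rpow (INR (ncount r J)) (1 - q / 2) * rpow (pqsum n r g p 2 J x) (q / 2).
Proof.
  intros HJ Hq. unfold pqsum.
  replace (rsum r (fun i => if J i then rpow (gnorm n g p x i) q else 0))
    with (rsum r (fun i => if J i then rpow (rpow (gnorm n g p x i) 2) (q / 2) else 0)).
  - apply power_mean_le; [exact HJ| |lra]. intros; apply rpow_ge0.
  - apply rsum_ext; intros i _. destruct (J i); [|reflexivity].
    rewrite rpow_rpow by apply rpow_ge0. f_equal; field.
Qed.

(* Off the support [S] of [xbar] the two sums agree; on [S], [xbar = xs - e]. *)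
Lemma pqsum_decrease_le n r g p q xbar xs : 1 <= p -> 0 < q <= 1 ->
  pqsum n r g p q (fun _ => true) xbar - pqsum n r g p q (fun _ => true) xs
  <= pqsum n r g p q (group_nz n g xbar) (fun j => xs j - xbar j)
     - pqsum n r g p q (fun i => negb (group_nz n g xbar i)) xs.
Proof.
  intros Hp Hq. rewrite pqsum_support, (pqsum_split n r g p q (group_nz n g xbar) xs).
  assert (pqsum n r g p q (group_nz n g xbar) xbar
          <= pqsum n r g p q (group_nz n g xbar) xs
             + pqsum n r g p q (group_nz n g xbar) (fun j => xs j - xbar j)).
  { apply pqsum_triangle; [exact Hp|exact Hq|]. intros j _.
    rewrite <- (Rabs_Ropp (xs j - xbar j)).
    replace (xbar j) with (xs j + - (xs j - xbar j)) at 1 by ring. apply Rabs_triang. }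
  lra.
Qed.

Lemma is_phi_le m n r g A p q s N phi x J T :
  is_phi m n r g A p q s N phi ->
  (forall i, J i = true -> (i < r)%nat) -> (ncount r J <= s)%nat ->
  pqnorm n r g p q (fun i => negb (J i)) x <= pqnorm n r g p q J x ->
  is_top_set n r g p x J N T ->
  phi * pqnorm n r g p 2 (fun i => orb (J i) (T i)) x <= norm2 m (matvec n A x).
Proof.
  intros [Hinf _] HJ HJs Hcone HT.
  replace (fun i => orb (J i) (T i)) with (fun i => orb (T i) (J i))
    by (apply functional_extensionality; intros; apply Bool.orb_comm).
  set (D := pqnorm n r g p 2 (fun i => orb (T i) (J i)) x).
  assert (Ha : 0 <= norm2 m (matvec n A x)) by apply sqrt_pos.
  destruct (classic (exists j, (j < n)%nat /\ x j <> 0)) as [Hx|Hx].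
  - assert (Hphi : phi <= norm2 m (matvec n A x) / D).
    { apply Hinf. exists x, J, T.
      split; [|split; [|split; [|split; [|split]]]]; auto. }
    assert (HD : 0 <= D) by apply rpow_ge0.
    destruct HD as [HD|HD].
    + apply Rmult_le_compat_r with (r := D) in Hphi; [|lra].
      replace (norm2 m (matvec n A x) / D * D) with (norm2 m (matvec n A x)) in Hphi
        by (field; lra).
      lra.
    + rewrite <- HD, Rmult_0_r. exact Ha.
  - replace D with 0; [rewrite Rmult_0_r; exact Ha|].
    symmetry. unfold D, pqnorm. rewrite rsum_zero; [apply rpow_0_l|]. intros i _.
    rewrite gnorm_eq0, rpow_0_l; [now destruct (orb (T i) (J i))|].
    intros j Hj _. destruct (Req_dec (x j) 0) as [|Hne]; [assumption|].
    exfalso; apply Hx; eauto.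
Qed.

Lemma ncount_ext r P Q : (forall i, (i < r)%nat -> P i = Q i) -> ncount r P = ncount r Q.
Proof. induction r; intros H; simpl; auto. rewrite IHr, H; auto. Qed.

Lemma ncount_le r P Q : (forall i, (i < r)%nat -> P i = true -> Q i = true) ->
  (ncount r P <= ncount r Q)%nat.
Proof.
  induction r; intros H; simpl; auto.
  assert (ncount r P <= ncount r Q)%nat by (apply IHr; auto).
  destruct (P r) eqn:E; [rewrite (H r); auto; lia|destruct (Q r); lia].
Qed.

Lemma ncount_false r : ncount r (fun _ => false) = O.
Proof. induction r; simpl; lia. Qed.

Lemma ncount_orb_eqb r P k : (k < r)%nat -> P k = false ->
  ncount r (fun i => orb (P i) (Nat.eqb i k)) = S (ncount r P).
Proof.
  induction r; intros Hk Pk; [lia|]. simpl.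
  destruct (Nat.eq_dec k r) as [->|Hkr].
  - rewrite Pk, Nat.eqb_refl. simpl.
    rewrite (ncount_ext r (fun i => orb (P i) (Nat.eqb i r)) P); [lia|].
    intros i Hi. destruct (Nat.eqb_spec i r); [lia|]. apply Bool.orb_false_r.
  - rewrite IHr by (auto; lia). destruct (Nat.eqb_spec r k); [lia|].
    rewrite Bool.orb_false_r. lia.
Qed.

Lemma argmax_or_none r (Q : nat -> bool) (h : nat -> R) :
  (forall k, (k < r)%nat -> Q k = false) \/
  exists k0, (k0 < r)%nat /\ Q k0 = true /\
    forall k, (k < r)%nat -> Q k = true -> h k <= h k0.
Proof.
  induction r as [|r IH]; [left; lia|].
  destruct (Q r) eqn:Qr.
  - right. destruct IH as [Hnone|[k0 [Hk0 [Qk0 Hmax]]]].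
    + exists r. repeat split; auto. intros k Hk Qk.
      destruct (Nat.eq_dec k r) as [->|]; [lra|]. rewrite Hnone in Qk by lia. discriminate.
    + destruct (Rle_or_lt (h r) (h k0)).
      * exists k0. repeat split; auto. intros k Hk Qk.
        destruct (Nat.eq_dec k r) as [->|]; [lra|]. apply Hmax; auto; lia.
      * exists r. repeat split; auto. intros k Hk Qk.
        destruct (Nat.eq_dec k r) as [->|]; [lra|]. specialize (Hmax k ltac:(lia) Qk). lra.
  - destruct IH as [Hnone|[k0 [Hk0 [Qk0 Hmax]]]].
    + left. intros k Hk. destruct (Nat.eq_dec k r) as [->|]; [exact Qr|]. apply Hnone; lia.
    + right. exists k0. repeat split; auto. intros k Hk Qk.
      destruct (Nat.eq_dec k r) as [->|]; [congruence|]. apply Hmax; auto; lia.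
Qed.

(* Greedy construction: add to a top set for [N] a largest remaining group. *)
Lemma top_set_exists n r g p x J N : exists T, is_top_set n r g p x J N T.
Proof.
  induction N as [|N [T [HT [Hc Hmax]]]].
  - exists (fun _ => false). split; [discriminate|split; [|discriminate]].
    now rewrite ncount_false.
  - destruct (argmax_or_none r (fun k => andb (negb (J k)) (negb (T k))) (gnorm n g p x))
      as [Hnone|[k0 [Hk0 [Qk0 Hk0max]]]].
    + exists T. split; [exact HT|split; [|exact Hmax]].
      assert (ncount r T = ncount r (fun i => negb (J i))); [|lia].
      apply ncount_ext. intros i Hi. specialize (Hnone i Hi).
      destruct (T i) eqn:Ti; [now destruct (HT i Ti) as [_ ->]|].
      destruct (J i); [reflexivity|discriminate].
    + apply andb_prop in Qk0 as [Jk0 Tk0]. apply Bool.negb_true_iff in Jk0, Tk0.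
      exists (fun i => orb (T i) (Nat.eqb i k0)). split; [|split].
      * intros i Hi. apply Bool.orb_prop in Hi as [Hi|Hi]; [now apply HT|].
        apply Nat.eqb_eq in Hi as ->. auto.
      * rewrite ncount_orb_eqb by auto.
        assert (Hle : (ncount r (fun i => orb (T i) (Nat.eqb i k0))
                       <= ncount r (fun i => negb (J i)))%nat).
        { apply ncount_le. intros i Hi Ti. apply Bool.orb_prop in Ti as [Ti|Ti].
          - now destruct (HT i Ti) as [_ ->].
          - apply Nat.eqb_eq in Ti as ->. now rewrite Jk0. }
        rewrite ncount_orb_eqb in Hle by auto. lia.
      * intros i k Hi Hk Ti Jk Tk. apply Bool.orb_false_iff in Tk as [Tk _].
        apply Bool.orb_prop in Ti as [Ti|Ti]; [now apply Hmax|].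
        apply Nat.eqb_eq in Ti as ->. apply Hk0max; auto. now rewrite Jk, Tk.
Qed.

Lemma is_top_set_ext n r g p x y J N T :
  (forall k, J k = false -> gnorm n g p x k = gnorm n g p y k) ->
  is_top_set n r g p x J N T -> is_top_set n r g p y J N T.
Proof.
  intros E [HT [Hc Hmax]]. split; [exact HT|split; [exact Hc|]].
  intros i k Hi Hk Ti Jk Tk. destruct (HT i Ti) as [_ Ji].
  rewrite <- !E by assumption. auto.
Qed.

Lemma powerRZ_2_opp_le K q : 0 < q -> powerRZ 2 (K - 1) * q >= 1 -> powerRZ 2 (- K) <= q / 2.
Proof.
  intros Hq HK.
  assert (E : powerRZ 2 (- K) * powerRZ 2 (K - 1) = / 2).
  { rewrite <- powerRZ_add by lra. replace (- K + (K - 1))%Z with (-1)%Z by lia.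
    simpl. field. }
  pose proof (powerRZ_lt 2 (- K) ltac:(lra)).
  apply Rle_trans with (powerRZ 2 (- K) * (powerRZ 2 (K - 1) * q)).
  - rewrite <- (Rmult_1_r (powerRZ 2 (- K))) at 1. apply Rmult_le_compat_l; lra.
  - right. rewrite <- Rmult_assoc, E. field.
Qed.

(* [a ^ 2 <= c a ^ q] forces [a ^ (2 - q) <= c]. *)
Lemma self_bounding_le a c q : 0 <= a -> 0 < c -> 0 < q < 2 ->
  a ^ 2 <= c * rpow a q -> c * rpow a q <= rpow c (2 / (2 - q)).
Proof.
  intros [Ha| <-] Hc Hq H; [|rewrite rpow_0_l, Rmult_0_r; apply rpow_ge0].
  assert (Ec : forall e, c * rpow a e = exp (ln c + e * ln a)).
  { intros e. rewrite rpow_exp, exp_plus, exp_ln by assumption. reflexivity. }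
  rewrite <- rpow_2_r, (rpow_exp a 2), Ec in H by lra.
  rewrite Ec, (rpow_exp c) by exact Hc. rewrite exp_le_exp in H. rewrite exp_le_exp.
  assert (Hla : ln a <= ln c / (2 - q))
    by (apply Rmult_le_reg_l with (2 - q); [lra|field_simplify; lra]).
  replace (2 / (2 - q) * ln c) with (ln c + q * (ln c / (2 - q))) by (field; lra).
  apply Rplus_le_compat_l, Rmult_le_compat_l; lra.
Qed.

Lemma rpow_constant_le lam s phi q u : 0 < lam -> 1 <= s -> 0 < phi -> 0 < q < 2 ->
  u <= q / 2 ->
  rpow (lam * rpow s (1 - q / 2) / rpow phi q) (2 / (2 - q))
  <= rpow lam (2 / (2 - q)) * rpow s ((1 - u) * (2 / (2 - q)))
     / rpow phi (2 * q / (2 - q)).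
Proof.
  intros Hl Hs Hphi Hq Hu.
  rewrite rpow_div, rpow_mult_distr, !rpow_rpow by
    (try apply rpow_gt0; try apply Rmult_le_pos; try apply rpow_ge0; lra).
  replace (q * (2 / (2 - q))) with (2 * q / (2 - q)) by (field; lra).
  apply Rmult_le_compat_r; [left; apply Rinv_0_lt_compat, rpow_gt0; exact Hphi|].
  apply Rmult_le_compat_l; [apply rpow_ge0|].
  apply rpow_le_r; [exact Hs|]. apply Rmult_le_compat_r; [|lra].
  left; apply Rdiv_lt_0_compat; lra.
Qed.

Lemma power_bounds lam phi s q u a L D :
  0 < lam -> 0 < phi -> 1 <= s -> 0 < q <= 1 -> u <= q / 2 -> 0 <= a -> 0 <= D ->
  a ^ 2 <= L -> L <= lam * rpow s (1 - q / 2) * rpow a q / rpow phi q -> phi * D <= a ->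
  L <= rpow lam (2 / (2 - q)) * rpow s ((1 - u) * (2 / (2 - q)))
       / rpow phi (2 * q / (2 - q)) /\
  D ^ 2 <= rpow lam (2 / (2 - q)) * rpow s ((1 - u) * (2 / (2 - q)))
           / rpow phi (4 / (2 - q)).
Proof.
  intros Hl Hphi Hs Hq Hu Ha HD HaL HL HDa.
  set (c := lam * rpow s (1 - q / 2) / rpow phi q).
  assert (Hc : 0 < c)
    by (apply Rdiv_lt_0_compat; [apply Rmult_lt_0_compat; [|apply rpow_gt0]|apply rpow_gt0]; lra).
  assert (HLc : L <= c * rpow a q).
  { eapply Rle_trans; [exact HL|]. right. unfold c. field.
    apply Rgt_not_eq, rpow_gt0; exact Hphi. }
  pose proof (self_bounding_le a c q Ha Hc ltac:(lra) ltac:(lra)) as Hself.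
  pose proof (rpow_constant_le lam s phi q u Hl Hs Hphi ltac:(lra) Hu) as Hconst.
  fold c in Hconst.
  set (C := rpow lam (2 / (2 - q)) * rpow s ((1 - u) * (2 / (2 - q)))) in *.
  split; [lra|].
  assert (Hphi4 : rpow phi (4 / (2 - q)) = rpow phi (2 * q / (2 - q)) * phi ^ 2).
  { rewrite <- rpow_2_r, <- rpow_plus_r by lra. f_equal; field; lra. }
  assert (HD2 : D ^ 2 <= a ^ 2 / phi ^ 2).
  { replace (a ^ 2 / phi ^ 2) with ((a / phi) ^ 2) by (field; lra).
    apply pow_incr. split; [exact HD|].
    apply Rmult_le_reg_l with phi; [exact Hphi|]. replace (phi * (a / phi)) with a by (field; lra).
    exact HDa. }
  rewrite Hphi4. eapply Rle_trans; [exact HD2|].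
  pose proof (rpow_gt0 phi (2 * q / (2 - q)) Hphi).
  replace (C / (rpow phi (2 * q / (2 - q)) * phi ^ 2))
    with (C / rpow phi (2 * q / (2 - q)) / phi ^ 2) by (field; lra).
  apply Rmult_le_compat_r; [left; apply Rinv_0_lt_compat; nra|lra].
Qed.

Lemma pqsum_le_of_grec n r g p q J T x a phi :
  (1 <= ncount r J)%nat -> 0 < q <= 2 -> 0 < phi -> 0 <= a ->
  phi * pqnorm n r g p 2 (fun i => orb (J i) (T i)) x <= a ->
  pqsum n r g p q J x <= rpow (INR (ncount r J)) (1 - q / 2) * rpow a q / rpow phi q.
Proof.
  intros HJ Hq Hphi Ha Hgrec.
  set (D := pqnorm n r g p 2 (fun i => orb (J i) (T i)) x) in *.
  assert (HJD : pqsum n r g p 2 J x <= D ^ 2).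
  { unfold D. rewrite pqnorm_sq. apply pqsum_subset. intros i Ji. now rewrite Ji. }
  assert (HDq : rpow (D ^ 2) (q / 2) <= rpow a q / rpow phi q).
  { rewrite <- rpow_2_r, rpow_rpow by apply rpow_ge0.
    replace (2 * (q / 2)) with q by field. rewrite <- rpow_div by lra.
    apply rpow_le_l; [lra|split; [apply rpow_ge0|]].
    apply Rmult_le_reg_l with phi; [exact Hphi|].
    replace (phi * (a / phi)) with a by (field; lra). exact Hgrec. }
  eapply Rle_trans; [apply pqsum_power_mean; [exact HJ|exact Hq]|].
  unfold Rdiv. rewrite Rmult_assoc. apply Rmult_le_compat_l; [apply rpow_ge0|].
  eapply Rle_trans; [|exact HDq].
  apply rpow_le_l; [lra|split; [apply pqsum_ge0|exact HJD]].
Qed.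

Lemma matvec_sub n A x y i :
  matvec n A (fun j => x j - y j) i = matvec n A x i - matvec n A y i.
Proof. unfold matvec. rewrite <- rsum_minus. apply rsum_ext; intros; ring. Qed.

Lemma level_set_bounds m n r g A p q lambda xbar s phi u xs T :
  group_partition n r g -> 0 < q <= 1 -> 1 <= p -> (1 <= s)%nat ->
  ncount r (group_nz n g xbar) = s ->
  is_phi m n r g A p q s s phi -> 0 < phi -> u <= q / 2 -> 0 < lambda ->
  (norm2 m (fun i => matvec n A xs i - matvec n A xbar i)) ^ 2
    + lambda * rpow (pqnorm n r g p q (fun _ => true) xs) q
    <= lambda * rpow (pqnorm n r g p q (fun _ => true) xbar) q ->
  is_top_set n r g p (fun j => xs j - xbar j) (group_nz n g xbar) s T ->
  (norm2 m (fun i => matvec n A xs i - matvec n A xbar i)) ^ 2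
    + lambda * rpow (pqnorm n r g p q (fun i => negb (group_nz n g xbar i)) xs) q
    <= rpow lambda (2 / (2 - q)) * rpow (INR s) ((1 - u) * (2 / (2 - q)))
       / rpow phi (2 * q / (2 - q))
  /\
  (pqnorm n r g p 2 (fun i => orb (group_nz n g xbar i) (T i)) (fun j => xs j - xbar j)) ^ 2
    <= rpow lambda (2 / (2 - q)) * rpow (INR s) ((1 - u) * (2 / (2 - q)))
       / rpow phi (4 / (2 - q)).
Proof.
  intros Hpart Hq Hp Hs1 Hs Hphi Hphi0 Hu Hl Hlev HT.
  set (S := group_nz n g xbar) in *. set (e := fun j => xs j - xbar j) in *.
  assert (He : matvec n A e = fun i => matvec n A xs i - matvec n A xbar i)
    by (apply functional_extensionality; intros i; apply matvec_sub).
  set (a := norm2 m (fun i => matvec n A xs i - matvec n A xbar i)) in *.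
  rewrite !pqnorm_rpow in * by lra.
  assert (Hoff : pqsum n r g p q (fun i => negb (S i)) e
                 = pqsum n r g p q (fun i => negb (S i)) xs).
  { apply pqsum_ext. intros i j Si Hj Hg. unfold e.
    rewrite (group_nz_false n g xbar i (proj1 (Bool.negb_true_iff _) Si) j Hj Hg). ring. }
  assert (Hbasic : a ^ 2 + lambda * pqsum n r g p q (fun i => negb (S i)) xs
                   <= lambda * pqsum n r g p q S e).
  { pose proof (pqsum_decrease_le n r g p q xbar xs Hp Hq) as Hdec. fold S e in Hdec.
    apply Rmult_le_compat_l with (r := lambda) in Hdec; lra. }
  assert (Hcone : pqnorm n r g p q (fun i => negb (S i)) e <= pqnorm n r g p q S e).
  { apply rpow_le_l; [left; apply Rdiv_lt_0_compat; lra|]. split; [apply pqsum_ge0|].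
    fold (pqsum n r g p q (fun i => negb (S i)) e) (pqsum n r g p q S e).
    pose proof (pow2_ge_0 a). nra. }
  pose proof (is_phi_le m n r g A p q s s phi e S T Hphi
                (fun i Si => group_nz_lt n r g xbar i Hpart Si) (Nat.eq_le_incl _ _ Hs) Hcone HT)
    as Hgrec.
  rewrite He in Hgrec. fold a in Hgrec.
  pose proof (pqsum_le_of_grec n r g p q S T e a phi ltac:(lia) ltac:(lra) Hphi0
                (sqrt_pos _) Hgrec) as HSe.
  rewrite Hs in HSe.
  apply power_bounds with (a := a).
  all: try assumption; try lra.
  - apply (le_INR 1); exact Hs1.
  - apply sqrt_pos.
  - apply rpow_ge0.
  - pose proof (pqsum_ge0 n r g p q (fun i => negb (S i)) xs). nra.
  - eapply Rle_trans; [apply Hbasic|]. unfold Rdiv in *.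
    rewrite !Rmult_assoc in HSe. rewrite !Rmult_assoc.
    apply Rmult_le_compat_l; [lra|exact HSe].
Qed.

Theorem proposition2p2
  (m n r : nat) (g : nat -> nat) (A : nat -> nat -> R) (p q lambda : R)
  (xbar : nat -> R) (s : nat) (phi : R) (K : Z) :
  group_partition n r g ->
  0 < q -> q <= 1 -> 1 <= p -> p <= 2 ->
  (1 <= s)%nat ->
  ncount r (group_nz n g xbar) = s ->
  is_phi m n r g A p q s s phi -> 0 < phi ->
  powerRZ 2 (K - 1) * q >= 1 ->
  (forall k : Z, powerRZ 2 (k - 1) * q >= 1 -> (K <= k)%Z) ->
  0 < lambda ->
  forall xs : nat -> R,
    (norm2 m (fun i => matvec n A xs i - matvec n A xbar i)) ^ 2
      + lambda * rpow (pqnorm n r g p q (fun _ => true) xs) q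
      <= lambda * rpow (pqnorm n r g p q (fun _ => true) xbar) q ->
    (norm2 m (fun i => matvec n A xs i - matvec n A xbar i)) ^ 2
      + lambda * rpow (pqnorm n r g p q (fun i => negb (group_nz n g xbar i)) xs) q
      <= rpow lambda (2 / (2 - q))
         * rpow (INR s) ((1 - powerRZ 2 (- K)) * (2 / (2 - q)))
         / rpow phi (2 * q / (2 - q))
    /\
    (forall T : nat -> bool,
       is_top_set n r g p xs (group_nz n g xbar) s T ->
       (pqnorm n r g p 2 (fun i => orb (group_nz n g xbar i) (T i))
          (fun j => xs j - xbar j)) ^ 2
       <= rpow lambda (2 / (2 - q))
          * rpow (INR s) ((1 - powerRZ 2 (- K)) * (2 / (2 - q)))
          / rpow phi (4 / (2 - q))).
Proof.
  intros Hpart Hq0 Hq1 Hp1 _ Hs1 Hs Hphi Hphi0 HK _ Hl xs Hlev.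
  pose proof (powerRZ_2_opp_le K q Hq0 HK) as Hu.
  split.
  - destruct (top_set_exists n r g p (fun j => xs j - xbar j) (group_nz n g xbar) s) as [T HT].
    now apply (level_set_bounds m n r g A p q lambda xbar s phi _ xs T).
  - intros T HT. apply (level_set_bounds m n r g A p q lambda xbar s phi _ xs T); auto.
    apply (is_top_set_ext n r g p xs); [|exact HT].
    intros k Sk. apply gnorm_ext. intros j Hj Hg.
    rewrite (group_nz_false n g xbar k Sk j Hj Hg). ring.
Qed.
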